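(* Let $(\mathfrak D,d)$ be a finite metric space, $p\in(1,\infty)$, $\vartheta\in\mathcal P(\mathfrak D)$, and let $\{\mu_k\}_{k\in\mathbb{N}}$ be a countable dense subset of $(\mathcal P(\mathfrak D),W_p)$. For each $k$ let $(\varphi_k,\psi_k)$ be functions $\mathfrak D\to\mathbb{R}$ with $\psi_k=\varphi_k^c$, $\varphi_k=\psi_k^c$ and $W_p^p(\vartheta,\mu_k)=\int_{\mathfrak D}\varphi_k\,d\mu_k+\int_{\mathfrak D}\psi_k\,d\vartheta$. For finite $I\subset\mathbb{N}$ define $G_I(\mu):=\max_{k\in I}\big(\int\varphi_k\,d\mu+\int\psi_k\,d\vartheta\big)$ and $F(\mu):=W_p^p(\vartheta,\mu)$ for $\mu\in\mathcal P(\mathfrak D)$. Then for every $\varepsilon>0$ there exists a finite $I_\varepsilon\subset\mathbb{N}$ with \[\sup_{\mu\in\mathcal P(\mathfrak D)}|F(\mu)-G_{I_\varepsilon}(\mu)|\le\varepsilon.\]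
   Context: $\mathcal P(\mathfrak D)$ is the set of probability measures on $\mathfrak D$, $W_p$ the $p$-Wasserstein distance with cost $d(x,y)^p$. The $c$-transform is $\varphi^c(x):=\inf_{y\in\mathfrak D}\big(d(x,y)^p-\varphi(y)\big)$. *)

From HB Require Import structures.
From mathcomp Require Import all_boot all_order all_algebra.
From mathcomp Require Import all_classical all_reals all_analysis.
Set Implicit Arguments. Unset Strict Implicit. Unset Printing Implicit Defensive.
Import Order.TTheory GRing.Theory Num.Theory.
Local Open Scope classical_set_scope.
Local Open Scope ring_scope.

Section Defs.
Variables (R : realType) (D : finType).

Definition is_metric (d : D -> D -> R) : Prop :=
  [/\ forall x y, 0 <= d x y,
      forall x y, d x y = 0 <-> x = y,
      forall x y, d x y = d y x &
      forall x y z, d x z <= d x y + d y z].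

Definition is_prob (mu : {ffun D -> R}) : Prop :=
  (forall x, 0 <= mu x) /\ \sum_x mu x = 1.

Definition integ (f : D -> R) (mu : {ffun D -> R}) : R := \sum_x f x * mu x.

Definition coupling (mu nu : {ffun D -> R}) (pi : {ffun D * D -> R}) : Prop :=
  [/\ forall z, 0 <= pi z,
      forall x, \sum_y pi (x, y) = mu x &
      forall y, \sum_x pi (x, y) = nu y].

Definition Wpp (d : D -> D -> R) (p : R) (mu nu : {ffun D -> R}) : R :=
  inf [set (\sum_z (d z.1 z.2 `^ p) * pi z) | pi in coupling mu nu].

Definition Wp (d : D -> D -> R) (p : R) (mu nu : {ffun D -> R}) : R :=
  (Wpp d p mu nu) `^ (p^-1).

Definition ctrans (d : D -> D -> R) (p : R) (phi : D -> R) : D -> R :=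
  fun x => inf [set (d x y `^ p - phi y) | y in [set: D]].

(* G_I(mu) = max_{k in I} (int phi_k dmu + int psi_k dtheta), for nonempty I *)
Definition GI (phi psi : nat -> D -> R) (theta : {ffun D -> R})
  (I : seq nat) (mu : {ffun D -> R}) : R :=
  let v k := integ (phi k) mu + integ (psi k) theta in
  \big[Num.max/v (head 0%N I)]_(k <- I) v k.

End Defs.

From HB Require Import structures.
From mathcomp Require Import all_boot all_order all_algebra.
From mathcomp Require Import all_classical all_reals all_analysis.
From mathcomp Require Import lra.
Set Implicit Arguments. Unset Strict Implicit. Unset Printing Implicit Defensive.
Import Order.TTheory GRing.Theory Num.Theory.
Local Open Scope classical_set_scope.
Local Open Scope ring_scope.

(* Weak duality gives [G_I <= F] for every [I]. Conversely, let [M] bound the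
   costs. [F] is [M]-Lipschitz for the l1 distance on the simplex (a coupling of
   [theta] and [mu] is turned into one of [theta] and [nu] by re-routing at
   most [|nu - mu|_1] of mass), and so is [nu |-> int phi_k dnu], because
   [phi_k = psi_k^c] oscillates by at most [M]. Hence optimality of
   [(phi_k, psi_k)] at [mu_k] gives
   [F nu <= int phi_k dnu + int psi_k dtheta + 2 M |nu - mu_k|_1].
   Off-diagonal costs are bounded below, so [W_p^p] dominates a multiple of the
   l1 distance and the [mu_k] are l1-dense; as the simplex is totally bounded,
   finitely many of them come l1-close to every [nu]. *)

Lemma finite_choice (T : finType) (P : T -> nat -> Prop) :
  exists I : seq nat, forall t, (exists k, P t k) -> exists2 k, k \in I & P t k.
Proof.
have /choice [f fP] : forall t, exists k, (exists k, P t k) -> P t k.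
  move=> t; have [[k Pk]|noP] := pselect (exists k, P t k); first by exists k.
  by exists 0%N => /noP.
exists [seq f t | t <- enum T] => t /fP Pt; exists (f t) => //.
by apply: map_f; rewrite mem_enum.
Qed.

Section Couplings.
Variables (R : realType) (D : finType).
Implicit Types (a b u v : {ffun D -> R}) (pi : {ffun D * D -> R}).

Definition l1dist a b : R := \sum_x `|a x - b x|.

Lemma l1dist_triangle a b u : l1dist a u <= l1dist a b + l1dist b u.
Proof. by rewrite /l1dist -big_split; apply: ler_sum => x _; exact: ler_distD. Qed.

Lemma is_prob_le1 a x : is_prob a -> 0 <= a x <= 1.
Proof. by move=> [a0 <-]; rewrite a0 (bigD1 x) //= lerDl sumr_ge0. Qed.

Lemma integ_lipschitz (M : R) (f : D -> R) a b :
  (forall x x', f x - f x' <= M) -> is_prob a -> is_prob b ->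
  integ f b - integ f a <= M * l1dist a b.
Proof.
move=> osc [a0 a1] [b0 b1]; have [x0 _|D0] := pickP (@predT D); last first.
  move: a1; rewrite big1 => [/eqP|x _]; first by rewrite eq_sym oner_eq0.
  by have := D0 x.
have -> : integ f b - integ f a = \sum_x (f x - f x0) * (b x - a x).
  under [RHS]eq_bigr do rewrite mulrBl.
  rewrite sumrB -mulr_sumr sumrB a1 b1 subrr mulr0 subr0 /integ -sumrB.
  by apply: eq_bigr => x _; rewrite mulrBr.
rewrite /l1dist mulr_sumr; apply: ler_sum => x _.
apply: le_trans (ler_norm _) _; rewrite normrM [`|b x - a x|]distrC.
rewrite ler_wpM2r // ler_norml; have := osc x x0; have := osc x0 x; lra.
Qed.

Definition lmarg pi : {ffun D -> R} := [ffun x => \sum_y pi (x, y)].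
Definition rmarg pi : {ffun D -> R} := [ffun y => \sum_x pi (x, y)].

Lemma coupling_marg pi : (forall z, 0 <= pi z) -> coupling (lmarg pi) (rmarg pi) pi.
Proof. by move=> pi0; split=> // x; rewrite ffunE. Qed.

Lemma couplingD a b u v pi pi' : coupling a b pi -> coupling u v pi' ->
  coupling (a + u) (b + v) (pi + pi').
Proof.
move=> [pi0 l r] [pi0' l' r']; split=> [z|x|y]; rewrite ffunE ?addr_ge0 //.
- by under eq_bigr do rewrite ffunE; rewrite big_split /= l l'.
- by under eq_bigr do rewrite ffunE; rewrite big_split /= r r'.
Qed.

Lemma coupling_mass a b pi : coupling a b pi -> \sum_z pi z = \sum_y b y.
Proof.
move=> [_ _ rm]; under [RHS]eq_bigr do rewrite -rm.
by rewrite exchange_big pair_bigA; apply: eq_bigr => -[].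
Qed.

Lemma coupling_prod a b : is_prob a -> is_prob b ->
  coupling a b [ffun z => a z.1 * b z.2].
Proof.
move=> [a0 a1] [b0 b1]; split.
- by move=> z; rewrite ffunE mulr_ge0.
- by move=> x; under eq_bigr do rewrite ffunE /=; rewrite -mulr_sumr b1 mulr1.
- by move=> y; under eq_bigr do rewrite ffunE /=; rewrite -mulr_suml a1 mul1r.
Qed.

Definition indep_plan u v : {ffun D * D -> R} :=
  [ffun z => u z.1 * v z.2 / \sum_y v y].

Lemma indep_plan_coupling u v : (forall x, 0 <= u x) -> (forall y, 0 <= v y) ->
  \sum_x u x = \sum_y v y -> coupling u v (indep_plan u v).
Proof.
move=> u0 v0 uv; split=> [z|x|y].
- by rewrite ffunE divr_ge0 ?mulr_ge0 ?sumr_ge0.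
- under eq_bigr do rewrite ffunE /=.
  rewrite -mulr_suml -mulr_sumr.
  have [v_eq0|v_neq0] := eqVneq (\sum_y v y) 0; last by rewrite mulfK.
  by rewrite (psumr_eq0P (P := predT) (fun x _ => u0 x) (etrans uv v_eq0)) ?mul0r.
- under eq_bigr do rewrite ffunE /=.
  rewrite -!mulr_suml uv.
  have [v_eq0|v_neq0] := eqVneq (\sum_y v y) 0; last by rewrite mulrAC mulfV ?mul1r.
  by rewrite (psumr_eq0P (P := predT) (fun y _ => v0 y) v_eq0) ?mulr0 ?mul0r.
Qed.

Lemma marg_gap_mass a b pi : is_prob a -> is_prob b ->
  \sum_x (a - lmarg pi) x = \sum_y (b - rmarg pi) y.
Proof.
move=> [_ a1] [_ b1].
under eq_bigr do rewrite !ffunE; under [RHS]eq_bigr do rewrite !ffunE.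
by rewrite !sumrB a1 b1 exchange_big.
Qed.

Lemma gap_plan_coupling a b pi : is_prob a -> is_prob b ->
  (forall x, lmarg pi x <= a x) -> (forall y, rmarg pi y <= b y) ->
  coupling (a - lmarg pi) (b - rmarg pi) (indep_plan (a - lmarg pi) (b - rmarg pi)).
Proof.
move=> pa pb la rb; apply: indep_plan_coupling; last exact: marg_gap_mass.
  by move=> x; have := la x; rewrite !ffunE subr_ge0.
by move=> y; have := rb y; rewrite !ffunE subr_ge0.
Qed.

Lemma coupling_complete a b pi : is_prob a -> is_prob b -> (forall z, 0 <= pi z) ->
  (forall x, lmarg pi x <= a x) -> (forall y, rmarg pi y <= b y) ->
  coupling a b (pi + indep_plan (a - lmarg pi) (b - rmarg pi)).
Proof.
move=> pa pb pi0 la rb.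
suff : coupling (lmarg pi + (a - lmarg pi)) (rmarg pi + (b - rmarg pi))
                (pi + indep_plan (a - lmarg pi) (b - rmarg pi)).
  by rewrite [lmarg pi + _]addrC [rmarg pi + _]addrC !subrK.
exact: couplingD (coupling_marg pi0) (gap_plan_coupling pa pb la rb).
Qed.

Definition shrink_right pi (b m : D -> R) : {ffun D * D -> R} :=
  [ffun z => pi z * (m z.2 / b z.2)].

Lemma shrink_right_le a b pi (m : D -> R) : coupling a b pi ->
  (forall y, 0 <= m y <= b y) -> forall z, 0 <= shrink_right pi b m z <= pi z.
Proof.
move=> [pi0 _ _] mb z; have /andP[m0 mle] := mb z.2.
rewrite ffunE mulr_ge0 ?divr_ge0 //= ?(le_trans m0 mle) // ler_piMr //.
have [->|b_neq0] := eqVneq (b z.2) 0; first by rewrite invr0 mulr0.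
by rewrite ler_pdivrMr ?mul1r // lt_def b_neq0 (le_trans m0 mle).
Qed.

Lemma rmarg_shrink_right a b pi (m : D -> R) : coupling a b pi ->
  (forall y, 0 <= m y <= b y) -> forall y, rmarg (shrink_right pi b m) y = m y.
Proof.
move=> [_ _ rm] mb y; rewrite ffunE.
under eq_bigr do rewrite ffunE /=.
rewrite -mulr_suml rm; have [b_eq0|b_neq0] := eqVneq (b y) 0; last by rewrite mulrC divfK.
by have := mb y; rewrite b_eq0 mul0r => /andP[m0 m_le0]; apply: le_anti; rewrite m0 m_le0.
Qed.

End Couplings.

Section Grid.
Variables (R : realType) (D : finType).

Lemma eq_inord_trunc_dist (N : nat) (u v : R) :
  0 <= u <= 1 -> 0 <= v <= 1 ->
  inord (Num.trunc (N%:R * u)) = inord (Num.trunc (N%:R * v)) :> 'I_N.+1 ->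
  `|u - v| * N%:R <= 1.
Proof.
move=> /andP[u0 u1] /andP[v0 v1].
have trunc_le (w : R) : 0 <= w <= 1 -> (Num.trunc (N%:R * w) <= N)%N.
  move=> /andP[w0 w1]; rewrite truncn_le_nat.
  by apply: (@le_lt_trans _ _ N%:R); rewrite ?ltr_nat // ler_piMr.
move=> /(f_equal val); rewrite /= !inordK ?ltnS ?trunc_le ?u0 ?v0 // => uv.
have := truncn_itv (mulr_ge0 (ler0n _ N) u0).
have := truncn_itv (mulr_ge0 (ler0n _ N) v0).
rewrite uv -natr1 => /andP[v_lo v_hi] /andP[u_lo u_hi].
rewrite -[N%:R]ger0_norm // -normrM ler_norml mulrBl.
apply/andP; split; lra.
Qed.

Definition grid (N : nat) (a : {ffun D -> R}) : {ffun D -> 'I_N.+1} :=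
  [ffun x => inord (Num.trunc (N%:R * a x))].

Lemma l1dist_grid N (a b : {ffun D -> R}) : is_prob a -> is_prob b ->
  grid N a = grid N b -> l1dist a b * N%:R <= #|D|%:R.
Proof.
move=> pa pb ab; rewrite /l1dist mulr_suml.
apply: le_trans (ler_sum (G := fun _ => 1) _ _) _; last by rewrite sumr_const.
move=> x _; apply: eq_inord_trunc_dist; rewrite ?is_prob_le1 //.
by have := congr1 (fun g : {ffun D -> 'I_N.+1} => g x) ab; rewrite !ffunE.
Qed.

(* Measures with the same grid are l1-close, and there are finitely many grids:
   for each grid shared by a measure l1-close to some [mu k], keep one such [k]. *)
Lemma finite_l1_net (mu : nat -> {ffun D -> R}) (eta : R) : 0 < eta ->
  (forall nu, is_prob nu -> exists k, l1dist nu (mu k) < eta) ->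
  exists I : seq nat, forall nu, is_prob nu ->
    exists2 k, k \in I & l1dist nu (mu k) <= 2 * eta.
Proof.
move=> eta_gt0 near.
have [N N_gt0 N_large] : exists2 N : nat, (0 < N)%N & #|D|%:R <= N%:R * eta.
  exists (Num.trunc (#|D|%:R / eta)).+1 => //.
  have /andP[_ /ltW] := truncn_itv (divr_ge0 (ler0n R #|D|) (ltW eta_gt0)).
  by rewrite ler_pdivrMr.
pose P (f : {ffun D -> 'I_N.+1}) k :=
  exists2 nu', is_prob nu' & grid N nu' = f /\ l1dist nu' (mu k) < eta.
have [I IP] := finite_choice P.
exists I => nu nu_prob; have [k0 k0_near] := near nu nu_prob.
have [|k kI [nu' nu'_prob [same_grid k_near]]] := IP (grid N nu).
  by exists k0, nu.
exists k => //.
have nu_nu' : l1dist nu nu' <= eta.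
  have N_pos : 0 < N%:R :> R by rewrite ltr0n.
  rewrite -(ler_pM2r N_pos) [eta * _]mulrC.
  exact: le_trans (l1dist_grid nu_prob nu'_prob (esym same_grid)) N_large.
have := l1dist_triangle nu nu' (mu k); lra.
Qed.

End Grid.

Section Transport.
Variables (R : realType) (D : finType) (d : D -> D -> R) (p : R).
Implicit Types (a b th nu : {ffun D -> R}) (pi : {ffun D * D -> R}) (phi psi : D -> R).

Definition cost pi : R := \sum_z d z.1 z.2 `^ p * pi z.

Lemma cost_ge0 pi : (forall z, 0 <= pi z) -> 0 <= cost pi.
Proof. by move=> pi0; apply: sumr_ge0 => z _; rewrite mulr_ge0 ?powR_ge0. Qed.

Lemma costD pi pi' : cost (pi + pi') = cost pi + cost pi'.
Proof. by rewrite /cost -big_split; apply: eq_bigr => z _; rewrite ffunE mulrDr. Qed.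

Lemma ler_cost pi pi' : (forall z, pi z <= pi' z) -> cost pi <= cost pi'.
Proof. by move=> le_pi; apply: ler_sum => z _; rewrite ler_wpM2l ?powR_ge0. Qed.

Lemma costs_lbound a b : has_lbound [set cost pi | pi in coupling a b].
Proof. by exists 0 => _ [pi [pi0 _ _] <-]; exact: cost_ge0. Qed.

Lemma Wpp_le_cost a b pi : coupling a b pi -> Wpp d p a b <= cost pi.
Proof. by move=> ab_pi; apply: ge_inf; [exact: costs_lbound | exists pi]. Qed.

Lemma le_Wpp a b x : is_prob a -> is_prob b ->
  (forall pi, coupling a b pi -> x <= cost pi) -> x <= Wpp d p a b.
Proof.
move=> pa pb le_x; apply: lb_le_inf; last by move=> _ [pi ab_pi <-]; exact: le_x.
by eexists; exists [ffun z => a z.1 * b z.2]; first exact: coupling_prod.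
Qed.

Lemma Wpp_ge0 a b : is_prob a -> is_prob b -> 0 <= Wpp d p a b.
Proof. by move=> pa pb; apply: le_Wpp => // pi [pi0 _ _]; exact: cost_ge0. Qed.

Lemma Wpp_near_cost a b e : is_prob a -> is_prob b -> 0 < e ->
  exists2 pi, coupling a b pi & cost pi < Wpp d p a b + e.
Proof.
move=> pa pb e_gt0.
have [|_ [pi ab_pi <-] near] := inf_adherent (E := [set cost pi | pi in coupling a b]) e_gt0.
  split; last exact: costs_lbound.
  by eexists; exists [ffun z => a z.1 * b z.2]; first exact: coupling_prod.
by exists pi.
Qed.

Lemma ctrans_le phi x y : ctrans d p phi x <= d x y `^ p - phi y.
Proof.
apply: ge_inf; last by exists y.
by exists (\big[Num.min/0]_y (d x y `^ p - phi y)) => _ [z _ <-]; exact: bigmin_le.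
Qed.

Lemma dual_le_cost phi th nu pi : coupling th nu pi ->
  integ phi nu + integ (ctrans d p phi) th <= cost pi.
Proof.
move=> [pi0 lm rm]; rewrite /integ.
have -> : \sum_y phi y * nu y = \sum_x \sum_y phi y * pi (x, y).
  by rewrite exchange_big; apply: eq_bigr => y _; rewrite -rm mulr_sumr.
have -> : \sum_x ctrans d p phi x * th x =
          \sum_x \sum_y ctrans d p phi x * pi (x, y).
  by apply: eq_bigr => x _; rewrite -lm mulr_sumr.
rewrite -big_split /=; under eq_bigr do rewrite -big_split /=.
rewrite pair_bigA /=; apply: ler_sum => -[x y] _ /=.
by rewrite -mulrDl ler_wpM2r // addrC -lerBrDr ctrans_le.
Qed.

Lemma dual_le_Wpp phi th nu : is_prob th -> is_prob nu ->
  integ phi nu + integ (ctrans d p phi) th <= Wpp d p th nu.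
Proof. by move=> pth pnu; apply: le_Wpp => // pi; exact: dual_le_cost. Qed.

Lemma l1dist_le_offdiag a b pi : coupling a b pi ->
  l1dist a b <= 2 * \sum_(z | z.1 != z.2) pi z.
Proof.
move=> [pi0 lm rm]; pose w x y := if x != y then pi (x, y) else 0.
have -> : \sum_(z | z.1 != z.2) pi z = \sum_x \sum_y w x y.
  by rewrite big_mkcond pair_bigA; apply: eq_bigr => -[].
have <- : \sum_x \sum_y (w x y + w y x) = 2 * \sum_x \sum_y w x y.
  under eq_bigr do rewrite big_split /=.
  rewrite big_split /= [X in _ + X]exchange_big /=; lra.
apply: ler_sum => x _; rewrite -lm -rm -sumrB.
apply: le_trans (ler_norm_sum _ _ _) _; apply: ler_sum => y _.
rewrite /w; have [->|_] /= := eqVneq x y; first by rewrite subrr normr0 addr0.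
by apply: le_trans (ler_normB _ _) _; rewrite !ger0_norm.
Qed.

Lemma l1dist_le_cost c a b pi : 0 <= c ->
  (forall x y, x != y -> c <= d x y `^ p) -> coupling a b pi ->
  c / 2 * l1dist a b <= cost pi.
Proof.
move=> c_ge0 c_le ab_pi; have [pi0 _ _] := ab_pi.
have off : c * \sum_(z | z.1 != z.2) pi z <= cost pi.
  rewrite mulr_sumr /cost [X in _ <= X](bigID (fun z : D * D => z.1 != z.2)) /=.
  rewrite -[X in X <= _]addr0.
  apply: lerD; first by apply: ler_sum => z /c_le ?; rewrite ler_wpM2r.
  by apply: sumr_ge0 => z _; rewrite mulr_ge0 ?powR_ge0.
have := ler_wpM2l c_ge0 (l1dist_le_offdiag ab_pi); lra.
Qed.

Lemma l1dist_le_Wpp c a b : 0 <= c -> (forall x y, x != y -> c <= d x y `^ p) ->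
  is_prob a -> is_prob b -> c / 2 * l1dist a b <= Wpp d p a b.
Proof. by move=> c_ge0 c_le pa pb; apply: le_Wpp => // pi; exact: l1dist_le_cost. Qed.

Lemma l1dist_lt_of_Wp c a b e : 0 < p -> 0 < c ->
  (forall x y, x != y -> c <= d x y `^ p) -> is_prob a -> is_prob b -> 0 < e ->
  Wp d p a b < (c / 2 * e) `^ p^-1 -> l1dist a b < e.
Proof.
move=> p_gt0 c_gt0 c_le pa pb e_gt0; apply: contraTT; rewrite -!leNgt => le_e.
have c2_ge0 : 0 <= c / 2 by rewrite divr_ge0 ?ltW.
apply: ge0_ler_powR.
- by rewrite invr_ge0 ltW.
- by rewrite nnegrE mulr_ge0 // ltW.
- by rewrite nnegrE Wpp_ge0.
- exact: le_trans (ler_wpM2l c2_ge0 le_e) (l1dist_le_Wpp (ltW c_gt0) c_le pa pb).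
Qed.

Lemma cost_ubound : exists2 M, 0 <= M & forall x y, d x y `^ p <= M.
Proof.
exists (\big[Num.max/0]_(z : D * D) d z.1 z.2 `^ p); first exact: bigmax_ge_id.
by move=> x y; exact: (le_bigmax 0 (fun z : D * D => d z.1 z.2 `^ p) (x, y)).
Qed.

Lemma offdiag_cost_lbound : is_metric d ->
  exists2 c, 0 < c & forall x y, x != y -> c <= d x y `^ p.
Proof.
move=> [d_ge0 d_eq0 _ _].
exists (\big[Num.min/1]_(z : D * D | z.1 != z.2) d z.1 z.2 `^ p).
  apply: lt_bigmin => // z z12; apply: powR_gt0; rewrite lt_def d_ge0 andbT.
  by apply: contra z12 => /eqP /d_eq0 ->.
by move=> x y xy; exact: (bigmin_le_cond 1 (j := (x, y))).
Qed.

Lemma l1_dense_of_Wp_dense (mu : nat -> {ffun D -> R}) : 0 < p -> is_metric d ->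
  (forall k, is_prob (mu k)) ->
  (forall nu, is_prob nu -> forall e, 0 < e -> exists k, Wp d p nu (mu k) < e) ->
  forall e, 0 < e -> forall nu, is_prob nu -> exists k, l1dist nu (mu k) < e.
Proof.
move=> p_gt0 /offdiag_cost_lbound [c c_gt0 c_le] mu_prob W_dense e e_gt0 nu nu_prob.
have ce_gt0 : 0 < c / 2 * e by rewrite mulr_gt0 // divr_gt0.
have [k Wk] := W_dense nu nu_prob _ (powR_gt0 p^-1 ce_gt0).
by exists k; exact: l1dist_lt_of_Wp Wk.
Qed.

Section CostBound.
Variable M : R.
Hypothesis M_ge0 : 0 <= M.
Hypothesis cost_le : forall x y, d x y `^ p <= M.

Lemma cost_le_mass pi : (forall z, 0 <= pi z) -> cost pi <= M * \sum_z pi z.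
Proof. by move=> pi0; rewrite mulr_sumr; apply: ler_sum => z _; rewrite ler_wpM2r. Qed.

Lemma ctrans_oscillation psi x x' : ctrans d p psi x - ctrans d p psi x' <= M.
Proof.
suff : ctrans d p psi x - M <= ctrans d p psi x' by lra.
apply: lb_le_inf; first by eexists; exists x'.
move=> _ [y _ <-]; have := ctrans_le psi x y; have := cost_le x y.
have := powR_ge0 (d x' y) p; lra.
Qed.

(* Keep the part of [pi] that brings mass [min (a y) (b y)] to each [y], and
   couple the leftover marginals independently; the leftover mass is at most
   [|a - b|_1] and each unit of it costs at most [M]. *)
Lemma coupling_glue th a b pi : is_prob th -> is_prob a -> is_prob b ->
  coupling th b pi ->
  exists2 pi', coupling th a pi' & cost pi' <= cost pi + M * l1dist a b.
Proof.
move=> pth pa pb th_b_pi; have [a0 _] := pa; have [b0 _] := pb.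
pose m y := Num.min (a y) (b y).
have m_itv y : 0 <= m y <= b y by rewrite le_min a0 b0 ge_min lexx orbT.
pose pi1 := shrink_right pi b m.
have pi1_le := shrink_right_le th_b_pi m_itv.
have rm1 := rmarg_shrink_right th_b_pi m_itv.
have pi10 z : 0 <= pi1 z by have /andP[] := pi1_le z.
have l1 x : lmarg pi1 x <= th x.
  have [_ <- _] := th_b_pi; rewrite ffunE; apply: ler_sum => y _.
  by have /andP[] := pi1_le (x, y).
have r1 y : rmarg pi1 y <= a y by rewrite rm1 ge_min lexx.
have plan_c := gap_plan_coupling pth pa l1 r1; have [plan0 _ _] := plan_c.
exists (pi1 + indep_plan (th - lmarg pi1) (a - rmarg pi1)).
  exact: coupling_complete pth pa pi10 l1 r1.
rewrite costD; apply: lerD; first by apply: ler_cost => z; have /andP[] := pi1_le z.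
apply: le_trans (cost_le_mass plan0) _.
rewrite (coupling_mass plan_c) ler_wpM2l //; apply: ler_sum => y _.
by rewrite 2!ffunE rm1 /m; case: (lerP (a y) (b y)) => [ab|_]; rewrite ?subrr ?subr_ge0.
Qed.

Lemma Wpp_lipschitz th a b : is_prob th -> is_prob a -> is_prob b ->
  Wpp d p th a <= Wpp d p th b + M * l1dist a b.
Proof.
move=> pth pa pb; apply/ler_addgt0Pr => e e_gt0.
have [pi pi_c pi_near] := Wpp_near_cost pth pb e_gt0.
have [pi' pi'_c pi'_cost] := coupling_glue pth pa pb pi_c.
have := Wpp_le_cost pi'_c; lra.
Qed.

Lemma Wpp_le_optimal_dual th mu nu phi psi : is_prob th -> is_prob mu -> is_prob nu ->
  phi = ctrans d p psi -> Wpp d p th mu = integ phi mu + integ psi th ->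
  Wpp d p th nu <= integ phi nu + integ psi th + 2 * M * l1dist nu mu.
Proof.
move=> pth pmu pnu phiE opt.
have := Wpp_lipschitz pth pnu pmu; rewrite opt.
have := integ_lipschitz (ctrans_oscillation psi) pnu pmu; rewrite -phiE; lra.
Qed.

End CostBound.
End Transport.

Lemma le_GI (R : realType) (D : finType) (phi psi : nat -> D -> R)
    (th nu : {ffun D -> R}) (I : seq nat) k :
  k \in I -> integ (phi k) nu + integ (psi k) th <= GI phi psi th I nu.
Proof.
by move=> kI; apply: (le_bigmax_seq _ k predT (fun j => integ (phi j) nu + integ (psi j) th)).
Qed.

Lemma GI_le (R : realType) (D : finType) (phi psi : nat -> D -> R)
    (th nu : {ffun D -> R}) (I : seq nat) (B : R) :
  (forall k, integ (phi k) nu + integ (psi k) th <= B) -> GI phi psi th I nu <= B.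
Proof. by move=> le_B; apply: bigmax_le. Qed.

Theorem theoremB6 (R : realType) (D : finType) (d : D -> D -> R) (p : R)
  (theta : {ffun D -> R}) (mu : nat -> {ffun D -> R})
  (phi psi : nat -> D -> R) :
  is_metric d -> 1 < p -> is_prob theta ->
  (forall k, is_prob (mu k)) ->
  (forall nu : {ffun D -> R}, is_prob nu ->
     forall e : R, 0 < e -> exists k, Wp d p nu (mu k) < e) ->
  (forall k, psi k = ctrans d p (phi k)) ->
  (forall k, phi k = ctrans d p (psi k)) ->
  (forall k, Wpp d p theta (mu k) = integ (phi k) (mu k) + integ (psi k) theta) ->
  forall eps : R, 0 < eps ->
  exists I : seq nat, I != [::] /\
    forall nu : {ffun D -> R}, is_prob nu ->
      `| Wpp d p theta nu - GI phi psi theta I nu | <= eps.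
Proof.
move=> d_metric p_gt1 th_prob mu_prob W_dense psiE phiE optimal eps eps_gt0.
have [M M_ge0 cost_le] := cost_ubound d p.
pose eta := eps / (4 * (M + 1)).
have eta_def : eta * (4 * (M + 1)) = eps by rewrite divfK //; lra.
have eta_gt0 : 0 < eta by rewrite divr_gt0 //; lra.
have l1_dense := l1_dense_of_Wp_dense (lt_trans ltr01 p_gt1) d_metric mu_prob W_dense eta_gt0.
have [I I_net] := finite_l1_net eta_gt0 l1_dense.
exists (0%N :: I); split => // nu nu_prob.
have [k kI near] := I_net nu nu_prob.
rewrite ger0_norm ?subr_ge0; last by apply: GI_le => j; rewrite psiE dual_le_Wpp.
have k_in : k \in 0%N :: I by rewrite inE kI orbT.
have := le_GI phi psi theta nu k_in.
have := Wpp_le_optimal_dual M_ge0 cost_le th_prob (mu_prob k) nu_prob (phiE k) (optimal k).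
have := ler_wpM2l M_ge0 near; lra.
Qed.
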